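(* Let $R$ be a commutative Noetherian domain which is an algebra over an uncountable field but is not itself a field. Suppose there is a countable multiplicatively closed subset $\mathcal A\subseteq R\setminus\{0\}$ such that $R\mathcal A^{-1}$ is the quotient field of $R$. Then $R$ has Krull dimension $1$ and $\mathrm{Spec}(R)$ is countable. *)

From HB Require Import structures.
From mathcomp Require Import all_boot all_order all_algebra.
Set Implicit Arguments. Unset Strict Implicit. Unset Printing Implicit Defensive.
Import Order.TTheory GRing.Theory Num.Theory.
Local Open Scope ring_scope.

(* Subsets of R are Prop-valued predicates (ideals need not be decidable). *)

Definition uncountable (T : Type) : Prop :=
  ~ exists f : nat -> T, forall x : T, exists n, f n = x.

Definition countable_subset (R : Type) (A : R -> Prop) : Prop :=
  exists f : nat -> R, forall x, A x -> exists n, f n = x.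

Definition is_ideal (R : comNzRingType) (I : R -> Prop) : Prop :=
  [/\ I 0, (forall x y, I x -> I y -> I (x + y)) & (forall r x, I x -> I (r * x))].

Definition is_prime_ideal (R : comNzRingType) (P : R -> Prop) : Prop :=
  [/\ is_ideal P, ~ P 1 & (forall x y, P (x * y) -> P x \/ P y)].

Definition noetherian (R : comNzRingType) : Prop :=
  forall I : nat -> (R -> Prop),
    (forall n, is_ideal (I n)) ->
    (forall n x, I n x -> I n.+1 x) ->
    exists N, forall n, (N <= n)%N -> forall x, I n x -> I N x.

Definition strict_subset (R : Type) (P Q : R -> Prop) : Prop :=
  (forall x, P x -> Q x) /\ exists x, Q x /\ ~ P x.

Definition prime_chain (R : comNzRingType) (n : nat) (c : nat -> (R -> Prop)) : Prop :=
  (forall i, (i <= n)%N -> is_prime_ideal (c i)) /\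
  (forall i, (i < n)%N -> strict_subset (c i) (c i.+1)).

Definition krull_dim_eq (R : comNzRingType) (d : nat) : Prop :=
  (exists c, @prime_chain R d c) /\
  (forall m c, @prime_chain R m c -> (m <= d)%N).

Definition spec_countable (R : comNzRingType) : Prop :=
  exists f : nat -> (R -> Prop),
    forall P, is_prime_ideal P -> exists n, forall x, P x <-> f n x.

Definition mult_closed (R : comNzRingType) (A : R -> Prop) : Prop :=
  A 1 /\ forall x y, A x -> A y -> A (x * y).

Definition localization_is_fraction_field (R : idomainType) (A : R -> Prop) : Prop :=
  forall z : {fraction R}, exists a s : R,
    A s /\ z = (@FracField.tofrac R a) / (@FracField.tofrac R s).

Definition is_field_ring (R : idomainType) : Prop :=
  forall x : R, x != 0 -> x \is a GRing.unit.

(* Every nonzero prime P of R is maximal among primes.  Otherwise take P ⊊ Q,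
   0 != p in P, and q in Q outside P and outside those minimal primes of p that do
   not contain Q.  The uncountably many nonzero elements q + λp (λ in the field)
   each divide some element of the countable set A, so a single s in A has
   infinitely many of them as divisors; the ascending chain condition and a
   Vandermonde argument then give p^m in (q + λp) for some λ.  A minimal prime M
   over q + λp inside Q contains p and q, hence lies strictly above P or above a
   minimal prime of p, contradicting Krull's principal ideal theorem.  So R has
   dimension 1, and each nonzero prime, containing some s in A, is one of the
   finitely many minimal primes over s: Spec R is countable. *)

From HB Require Import structures.
From mathcomp Require Import all_boot all_order all_algebra.
From mathcomp Require Import ring.
From Stdlib Require Import Classical ClassicalEpsilon.
Import GRing.Theory.
Set Implicit Arguments. Unset Strict Implicit. Unset Printing Implicit Defensive.
Local Open Scope ring_scope.

Definition included (T : Type) (I J : T -> Prop) := forall r, I r -> J r.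

Section Ideals.
Variable R : comNzRingType.
Implicit Types (I J P : R -> Prop) (x y r : R).

Lemma mem_ideal0 I : is_ideal I -> I 0.
Proof. by case. Qed.

Lemma mem_idealD I x y : is_ideal I -> I x -> I y -> I (x + y).
Proof. by case=> _ h _; apply: h. Qed.

Lemma mem_idealMl I r x : is_ideal I -> I x -> I (r * x).
Proof. by case=> _ _ h; apply: h. Qed.

Lemma mem_idealMr I r x : is_ideal I -> I x -> I (x * r).
Proof. by move=> hI hx; rewrite mulrC; apply: mem_idealMl. Qed.

Lemma mem_idealN I x : is_ideal I -> I x -> I (- x).
Proof. by move=> hI hx; rewrite -mulN1r; apply: mem_idealMl. Qed.

Lemma mem_idealB I x y : is_ideal I -> I x -> I y -> I (x - y).
Proof. by move=> hI hx hy; apply: mem_idealD => //; apply: mem_idealN. Qed.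

Lemma prime_ideal_ideal P : is_prime_ideal P -> is_ideal P.
Proof. by case. Qed.

Lemma prime_idealM_neq P u v : is_prime_ideal P -> ~ P u -> ~ P v -> ~ P (u * v).
Proof. by case=> _ _ h hu hv /h []. Qed.

Lemma prime_ideal_prod P n (a : nat -> R) :
  is_prime_ideal P -> P (\prod_(i < n) a i) -> exists2 i, (i < n)%N & P (a i).
Proof.
case=> _ hP1 hp; elim: n => [|n IH]; first by rewrite big_ord0.
rewrite big_ord_recr /= => /hp [/IH [i hi hPi]|hn]; last by exists n.
by exists i => //; apply: ltnW.
Qed.

Lemma prime_idealX P n x : is_prime_ideal P -> P (x ^+ n) -> P x.
Proof.
case=> _ hP1 hp; elim: n => [|n IH]; first by rewrite expr0.
by rewrite exprS => /hp [].
Qed.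

Definition principal x := fun r => exists c, r = c * x.

Lemma principal_ideal x : is_ideal (principal x).
Proof.
split.
- by exists 0; rewrite mul0r.
- by move=> a b [c1 ->] [c2 ->]; exists (c1 + c2); rewrite mulrDl.
- by move=> r a [c ->]; exists (r * c); rewrite mulrA.
Qed.

Lemma principal_id x : principal x x.
Proof. by exists 1; rewrite mul1r. Qed.

Lemma principal_included I x : is_ideal I -> I x -> included (principal x) I.
Proof. by move=> hI hx r [c ->]; apply: mem_idealMl. Qed.

Definition adjoin J x := fun r => exists j c, J j /\ r = j + c * x.

Lemma adjoin_ideal J x : is_ideal J -> is_ideal (adjoin J x).
Proof.
move=> hJ; split.
- by exists 0, 0; split; [exact: mem_ideal0 | rewrite mul0r addr0].
- move=> a b [j1 [c1 [h1 ->]]] [j2 [c2 [h2 ->]]].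
  by exists (j1 + j2), (c1 + c2); split; [exact: mem_idealD | ring].
- move=> r a [j1 [c1 [h1 ->]]].
  by exists (r * j1), (r * c1); split; [exact: mem_idealMl | ring].
Qed.

Lemma included_adjoin J x : included J (adjoin J x).
Proof. by move=> r hr; exists r, 0; rewrite mul0r addr0. Qed.

Lemma adjoin_id J x : is_ideal J -> adjoin J x x.
Proof. by move=> hJ; exists 0, 1; rewrite add0r mul1r; split => //; apply: mem_ideal0. Qed.

(* Choice turns a chain without a maximal element into a strictly ascending chain of ideals. *)
Lemma noetherian_maximal (S : (R -> Prop) -> Prop) :
  noetherian R -> (forall I, S I -> is_ideal I) -> (exists I, S I) ->
  exists I, S I /\ forall J, S J -> included I J -> included J I.
Proof.
move=> hN hS [I0 hI0]; apply: NNPP => hno.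
have step (X : sig S) : exists Y : sig S,
    included (sval X) (sval Y) /\ exists x, sval Y x /\ ~ sval X x.
  case: X => I hI /=; apply: NNPP => h; apply: hno; exists I; split => // J hJ hIJ x hJx.
  apply: NNPP => hx; apply: h; exists (exist _ J hJ) => /=; split => //.
  by exists x.
pose next X := sval (constructive_indefinite_description _ (step X)).
have hnext X := svalP (constructive_indefinite_description _ (step X)).
pose c n := sval (iter n next (exist _ I0 hI0)).
have [N hNc] := hN c (fun n => hS _ (svalP _)) (fun n => (hnext _).1).
have [x [hx1 hx2]] := (hnext (iter N next (exist _ I0 hI0))).2.
by apply: hx2; apply: (hNc N.+1).
Qed.

Definition ideal_span (a : nat -> R) n := fun r => exists c : nat -> R, r = \sum_(i < n) c i * a i.

Lemma ideal_span_ideal (a : nat -> R) n : is_ideal (ideal_span a n).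
Proof.
split.
- by exists (fun _ => 0); rewrite big1 // => i _; rewrite mul0r.
- move=> x y [c1 ->] [c2 ->]; exists (fun i => c1 i + c2 i).
  by rewrite -big_split /=; apply: eq_bigr => i _; rewrite mulrDl.
- move=> r x [c ->]; exists (fun i => r * c i).
  by rewrite mulr_sumr; apply: eq_bigr => i _; rewrite mulrA.
Qed.

Lemma ideal_span_mem (a : nat -> R) n i : (i < n)%N -> ideal_span a n (a i).
Proof.
move=> hi; exists (fun j => if j == i then 1 else 0).
rewrite (bigD1 (Ordinal hi)) //= eqxx mul1r big1 ?addr0 // => j hj.
by rewrite ifN ?mul0r //; apply: contra hj => /eqP e; apply/eqP/val_inj.
Qed.

Lemma ideal_span_rcons (a : nat -> R) n y :
  included (ideal_span a n) (ideal_span (fun i => if i == n then y else a i) n.+1).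
Proof.
move=> r [c ->]; exists (fun i => if i == n then 0 else c i).
rewrite big_ord_recr /= eqxx mul0r addr0; apply: eq_bigr => i _.
by rewrite (ltn_eqF (ltn_ord i)).
Qed.

Lemma noetherian_finitely_generated I : noetherian R -> is_ideal I ->
  exists n (a : nat -> R), (forall i, (i < n)%N -> I (a i)) /\ included I (ideal_span a n).
Proof.
move=> hN hI.
pose S J := exists n (a : nat -> R),
  (forall i, (i < n)%N -> I (a i)) /\ forall r, J r <-> ideal_span a n r.
have S_ideal J : S J -> is_ideal J.
  case=> n [a [_ hJ]]; have [h0 hD hM] := ideal_span_ideal a n.
  split; first exact/hJ.
    by move=> x y /hJ hx /hJ hy; apply/hJ; apply: hD.
  by move=> r x /hJ hx; apply/hJ; apply: hM.
have S0 : exists J, S J by exists (ideal_span (fun _ => 0) 0), 0%N, (fun _ => 0).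
have [J [[n [a [ha hJ]]] hmax]] := noetherian_maximal hN S_ideal S0.
exists n, a; split => // y hy; apply: NNPP => hny.
pose a' i := if i == n then y else a i.
have hS : S (ideal_span a' n.+1).
  exists n.+1, a'; split => // i; rewrite ltnS leq_eqVlt /a' => /orP [/eqP ->|hi].
    by rewrite eqxx.
  by rewrite (ltn_eqF hi); apply: ha.
apply: hny; apply/hJ; apply: (hmax _ hS) => [r /hJ|]; first exact: ideal_span_rcons.
by have := ideal_span_mem a' (ltnSn n); rewrite /a' eqxx.
Qed.

End Ideals.

Section PrimeProducts.
Variable R : comNzRingType.
Implicit Types (I J P : R -> Prop) (x y r : R).

Definition prime_product_over I n (C : nat -> R -> Prop) :=
  (forall i, (i < n)%N -> is_prime_ideal (C i) /\ included I (C i)) /\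
  (forall a : nat -> R, (forall i, (i < n)%N -> C i (a i)) -> I (\prod_(i < n) a i)).

Lemma prime_product_over_cat I J x y n1 n2 C1 C2 :
  is_ideal J -> J (x * y) -> prime_product_over (adjoin J x) n1 C1 ->
  prime_product_over (adjoin J y) n2 C2 ->
  prime_product_over J (n1 + n2) (fun i => if (i < n1)%N then C1 i else C2 (i - n1)%N).
Proof.
move=> hJ hxy [hC1 hP1] [hC2 hP2]; split.
  move=> i hi; case: ifP => hin.
    by have [h1 h2] := hC1 i hin; split => // r /included_adjoin /h2.
  have hi2 : (i - n1 < n2)%N by rewrite ltn_subLR // leqNgt hin.
  by have [h1 h2] := hC2 _ hi2; split => // r /included_adjoin /h2.
move=> a ha; rewrite big_split_ord /=.
have ha1 i : (i < n1)%N -> C1 i (a i).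
  by move=> hi; have := ha i (ltn_addr n2 hi); rewrite hi.
have ha2 i : (i < n2)%N -> C2 i (a (n1 + i)%N).
  move=> hi; have := ha (n1 + i)%N.
  by rewrite ltn_add2l (ltnNge (n1 + i) n1) leq_addr /= addKn; apply.
have [j1 [c1 [hj1 ->]]] := hP1 a ha1.
have [j2 [c2 [hj2 ->]]] := hP2 (fun i => a (n1 + i)%N) ha2.
have -> : (j1 + c1 * x) * (j2 + c2 * y) =
  (j2 + c2 * y) * j1 + (c1 * x) * j2 + (c1 * c2) * (x * y) by ring.
by apply: mem_idealD => //; [apply: mem_idealD => //; apply: mem_idealMl | apply: mem_idealMl].
Qed.

Lemma noetherian_prime_product_over I : noetherian R -> is_ideal I ->
  exists n C, prime_product_over I n C.
Proof.
move=> hN hI; apply: NNPP => hbad.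
have [J [[hJ hJb] hmax]] :=
  noetherian_maximal (S := fun J => is_ideal J /\ ~ exists n C, prime_product_over J n C)
    hN (fun J h => h.1) (ex_intro _ I (conj hI hbad)).
apply: hJb; case: (classic (J 1)) => [hJ1|hJ1].
  by exists 0%N, (fun _ => J); split => // a _; rewrite big_ord0.
case: (classic (forall x y, J (x * y) -> J x \/ J y)) => [hpr|hnp].
  exists 1%N, (fun _ => J); split; first by move=> i _; split=> // r.
  by move=> a ha; rewrite big_ord1; apply: ha.
have [x hx] := not_all_ex_not _ _ hnp; have [y hy] := not_all_ex_not _ _ hx.
have [hxy /not_or_and [hnx hny]] := imply_to_and _ _ hy.
have good z : ~ J z -> exists n C, prime_product_over (adjoin J z) n C.
  move=> hz; apply: NNPP => hb; apply/hz/(hmax _ _ (@included_adjoin _ J z)).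
    by split => //; apply: adjoin_ideal.
  exact: adjoin_id.
have [n1 [C1 h1]] := good x hnx; have [n2 [C2 h2]] := good y hny.
by exists (n1 + n2)%N; eexists; apply: prime_product_over_cat h1 h2.
Qed.

Lemma prime_product_over_cover I n C G : prime_product_over I n C ->
  is_prime_ideal G -> included I G -> exists2 i, (i < n)%N & included (C i) G.
Proof.
move=> [_ hP] hG hIG; apply: NNPP => hno.
have h i : exists a, (i < n)%N -> C i a /\ ~ G a.
  case: (ltnP i n) => hi; last by exists 0.
  apply: NNPP => hh; apply: hno; exists i => // r hr; apply: NNPP => hGr.
  by apply: hh; exists r.
pose a i := sval (constructive_indefinite_description _ (h i)).
have ha i : (i < n)%N -> C i (a i) /\ ~ G (a i).
  exact: (svalP (constructive_indefinite_description _ (h i))).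
have [i hi] := prime_ideal_prod hG (hIG _ (hP a (fun i hi => (ha i hi).1))).
exact: (ha i hi).2.
Qed.

End PrimeProducts.

Lemma minimal_index (T : Type) (G : T -> Prop) (C : nat -> T -> Prop) n :
  (exists2 i, (i < n)%N & included (C i) G) ->
  exists i, [/\ (i < n)%N, included (C i) G &
                forall j, (j < n)%N -> included (C j) (C i) -> included (C i) (C j)].
Proof.
elim: n => [[i]//|n IH].
case: (classic (exists2 i, (i < n)%N & included (C i) G)) => [hex _|hno [i hi hiG]].
  have [i0 [hi0 hi0G hmin]] := IH hex.
  case: (classic (included (C n) (C i0) /\ ~ included (C i0) (C n))) => [[h1 h2]|hno].
    exists n; split => //; first by move=> r /h1 /hi0G.
    move=> j; rewrite ltnS leq_eqVlt => /orP [/eqP -> //|hj] hjn.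
    by case: h2 => r /(hmin j hj (fun r h => h1 r (hjn r h))); apply: hjn.
  exists i0; split => //; first exact: ltnW.
  move=> j; rewrite ltnS leq_eqVlt => /orP [/eqP ->|hj]; last exact: hmin.
  by move=> h; apply: NNPP => h'; apply: hno.
have hin : i = n.
  apply/eqP; move: hi; rewrite ltnS leq_eqVlt => /orP [//|hlt].
  by case: hno; exists i.
subst i; exists n; split => // j; rewrite ltnS leq_eqVlt => /orP [/eqP -> //|hj] hjn.
by case: hno; exists j => // r /hjn /hiG.
Qed.

Definition minimal_prime_over (R : comNzRingType) (M : R -> Prop) x :=
  [/\ is_prime_ideal M, M x &
      forall G, is_prime_ideal G -> G x -> included G M -> included M G].

Lemma minimal_prime_below (R : comNzRingType) (G : R -> Prop) x :
  noetherian R -> is_prime_ideal G -> G x ->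
  exists M, minimal_prime_over M x /\ included M G.
Proof.
move=> hN hG hGx.
have [n [C hC]] := noetherian_prime_product_over hN (principal_ideal x).
have hGp := principal_included (prime_ideal_ideal hG) hGx.
have [i [hi hiG hmin]] := minimal_index (prime_product_over_cover hC hG hGp).
have [hCi hxCi] := hC.1 i hi.
exists (C i); split => //; split => //; first exact/hxCi/principal_id.
move=> H hH hHx hHC.
have [j hj hjH] := prime_product_over_cover hC hH (principal_included (prime_ideal_ideal hH) hHx).
by move=> r /(hmin j hj (fun r h => hHC r (hjH r h))); apply: hjH.
Qed.

Lemma prime_avoidance (R : comNzRingType) (I : R -> Prop) n (G : nat -> R -> Prop) :
  is_ideal I -> (forall i, (i < n)%N -> is_prime_ideal (G i)) ->
  (forall i, (i < n)%N -> exists r, I r /\ ~ G i r) ->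
  exists r, I r /\ forall i, (i < n)%N -> ~ G i r.
Proof.
move=> hI; elim: n => [|n IH] hG hex; first by exists 0; split => //; apply: mem_ideal0.
have [a [ha hav]] := IH (fun i hi => hG i (ltnW hi)) (fun i hi => hex i (ltnW hi)).
case: (classic (G n a)) => [hGa|hGa]; last first.
  exists a; split => // i; rewrite ltnS leq_eqVlt => /orP [/eqP -> //|]; exact: hav.
have [b [hb hGb]] := hex n (ltnSn n).
have hGn := hG n (ltnSn n); have [hGni hGn1 hGnp] := hGn.
have hg i : exists g, G i g /\ ~ G n g \/ included (G i) (G n) /\ g = 1.
  case: (classic (included (G i) (G n))) => h; first by exists 1; right.
  have [r hr] := not_all_ex_not _ _ h.
  by exists r; left; apply: imply_to_and.
pose g i := sval (constructive_indefinite_description _ (hg i)).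
have hgi i : G i (g i) /\ ~ G n (g i) \/ included (G i) (G n) /\ g i = 1.
  exact: (svalP (constructive_indefinite_description _ (hg i))).
have hgn i : ~ G n (g i) by case: (hgi i) => [[]|[_ ->]].
set c := b * \prod_(i < n) g i.
have hc : ~ G n c by move=> /hGnp [//|] /(prime_ideal_prod hGn) [i _]; apply: hgn.
have ea : a = (a + c) - c by ring.
have ec : c = (a + c) - a by ring.
exists (a + c); split; first by apply: mem_idealD => //; apply: mem_idealMr.
move=> i; rewrite ltnS leq_eqVlt => /orP [/eqP ->|hi] h.
  by apply: hc; rewrite ec; apply: mem_idealB.
have [hGii _ _] := hG i (ltnW hi).
case: (hgi i) => [[hgG _]|[hsub _]].
  apply: (hav i hi); rewrite ea; apply: mem_idealB => //; rewrite /c; apply: mem_idealMl => //.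
  by rewrite (bigD1 (Ordinal hi)) //=; apply: mem_idealMr.
by apply: hc; rewrite ec; apply: mem_idealB => //; apply: hsub.
Qed.

Lemma nonunit_prime_ideal (R : comUnitRingType) (z : R) :
  noetherian R -> z \isn't a GRing.unit -> exists M, is_prime_ideal M /\ M z.
Proof.
move=> hN hz.
have hne : exists M, is_ideal M /\ M z /\ ~ M 1.
  exists (principal z); split; first exact: principal_ideal.
  split; first exact: principal_id.
  case=> c hc; move/negP: hz; apply; apply/unitrP; exists c.
  by rewrite -hc mulrC -hc.
have [M [[hMi [hMz hM1]] hmax]] :=
  noetherian_maximal (S := fun M => is_ideal M /\ M z /\ ~ M 1) hN (fun M h => h.1) hne.
exists M; split => //; split => // a b hab.
case: (classic (M a)) => [|ha]; [by left|right].
have [m [c [hm e]]] : adjoin M a 1.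
  apply: NNPP => hn; apply/ha/(hmax _ _ (@included_adjoin _ M a)); last exact: adjoin_id.
  by split; [apply: adjoin_ideal | split => //; apply: included_adjoin].
have -> : b = b * m + c * (a * b) by rewrite -{1}[b]mulr1 e; ring.
by apply: mem_idealD => //; apply: mem_idealMl.
Qed.

Section Saturation.
Variable R : comNzRingType.
Implicit Types (I J K M P : R -> Prop) (x y r : R).

(* For a prime M, saturation M I is the contraction I R_M ∩ R of the extension of I
   to the localisation at M; saturated ideals are those equal to their saturation. *)
Definition saturation M I := fun r => exists u, ~ M u /\ I (u * r).
Definition saturated M I := forall u r, ~ M u -> I (u * r) -> I r.

Lemma saturation_ideal M I : is_prime_ideal M -> is_ideal I -> is_ideal (saturation M I).
Proof.
move=> hM hI; have [_ hM1 _] := hM; split.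
- by exists 1; split => //; rewrite mulr0; apply: mem_ideal0.
- move=> a b [u [hu ha]] [v [hv hb]]; exists (u * v); split; first exact: prime_idealM_neq.
  have -> : u * v * (a + b) = v * (u * a) + u * (v * b) by ring.
  by apply: mem_idealD => //; apply: mem_idealMl.
- move=> r a [u [hu ha]]; exists u; split => //.
  have -> : u * (r * a) = r * (u * a) by ring.
  exact: mem_idealMl.
Qed.

Lemma saturation_saturated M I : is_prime_ideal M -> saturated M (saturation M I).
Proof.
move=> hM u r hu [v [hv h]]; exists (v * u); split; first exact: prime_idealM_neq.
by rewrite -mulrA.
Qed.

Lemma included_saturation M I : is_prime_ideal M -> included I (saturation M I).
Proof. by case=> _ h1 _ r hr; exists 1; rewrite mul1r. Qed.

Definition ideal_add I J := fun r => exists a b, I a /\ J b /\ r = a + b.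

Lemma ideal_add_ideal I J : is_ideal I -> is_ideal J -> is_ideal (ideal_add I J).
Proof.
move=> hI hJ; split.
- by exists 0, 0; rewrite addr0; split; [|split]; [apply: mem_ideal0|apply: mem_ideal0|].
- move=> a b [a1 [a2 [h1 [h2 ->]]]] [b1 [b2 [h3 [h4 ->]]]].
  by exists (a1 + b1), (a2 + b2); split; [|split; [|ring]]; apply: mem_idealD.
- move=> r a [a1 [a2 [h1 [h2 ->]]]].
  by exists (r * a1), (r * a2); split; [|split; [|ring]]; apply: mem_idealMl.
Qed.

Definition colon J b := fun r => J (r * b).

Lemma colon_ideal J b : is_ideal J -> is_ideal (colon J b).
Proof.
move=> hJ; split; rewrite /colon.
- by rewrite mul0r; apply: mem_ideal0.
- by move=> u v hu hv; rewrite mulrDl; apply: mem_idealD.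
- by move=> r u hu; rewrite -mulrA; apply: mem_idealMl.
Qed.

Lemma maximal_colon_prime J a : is_ideal J -> ~ J a ->
  (forall b, ~ J b -> included (colon J a) (colon J b) -> included (colon J b) (colon J a)) ->
  is_prime_ideal (colon J a).
Proof.
move=> hJ ha hmax; split; first exact: colon_ideal.
  by rewrite /colon mul1r.
move=> r s hrs; case: (classic (colon J a r)) => [|hr]; [by left | right].
have hra : ~ J (r * a) by [].
apply: (hmax _ hra); last by rewrite /colon mulrA [s * r]mulrC.
by move=> t ht; rewrite /colon mulrA [t * r]mulrC -mulrA; apply: mem_idealMl.
Qed.

Definition saturated_chain M J (G : nat -> R -> Prop) :=
  [/\ (forall n, is_ideal (G n)), (forall n, saturated M (G n)),
      (forall n, included (G n.+1) (G n)) & (forall n, included J (G n))].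

(* A weak descending chain condition for ideals of R_M containing J R_M: every
   such chain has arbitrarily late non-strict steps. *)
Definition dcc_saturated M J :=
  forall G, saturated_chain M J G -> forall N0, exists2 N, (N0 <= N)%N & included (G N) (G N.+1).

Lemma chain_included (G : nat -> R -> Prop) :
  (forall n, included (G n.+1) (G n)) -> forall m n, (m <= n)%N -> included (G n) (G m).
Proof.
move=> h m n /subnK <-; elim: (n - m)%N => [|k IH] r //=.
by rewrite addSn => /h /IH.
Qed.

Lemma saturated_chain_adjoin M J G a : is_prime_ideal M -> saturated_chain M J G ->
  saturated_chain M (saturation M (adjoin J a)) (fun n => saturation M (adjoin (G n) a)).
Proof.
move=> hM [hGi hGs hGd hGJ]; split => n.
- by apply: saturation_ideal => //; apply: adjoin_ideal.
- exact: saturation_saturated.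
- by move=> r [u [hu [g [c [hg e]]]]]; exists u; split => //; exists g, c; split => //; apply: hGd.
- by move=> r [u [hu [j [c [hj e]]]]]; exists u; split => //; exists j, c; split => //; apply: hGJ.
Qed.

(* If M a lies in J, a chain over J either contains a throughout, and is then a
   chain over J + R a, or misses a from some point on, and then its steps are
   detected by the chain of saturations of G n + R a. *)
Lemma dcc_saturated_adjoin M J a : is_prime_ideal M ->
  (forall c, M c -> J (c * a)) -> dcc_saturated M (saturation M (adjoin J a)) ->
  dcc_saturated M J.
Proof.
move=> hM hMa hgood G hG N0; have [hGi hGs hGd hGJ] := hG.
case: (classic (forall n, G n a)) => [hall|/not_all_ex_not [n1 hn1]].
  apply: hgood; split => // n r [u [hu [j [c [hj e]]]]]; apply: (hGs n u) => //.
  by rewrite e; apply: mem_idealD; [apply: hGi | apply: hGJ | apply: mem_idealMl].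
have [N hN0 hHN] := hgood _ (saturated_chain_adjoin a hM hG) (maxn N0 n1).
exists N; first exact: leq_trans (leq_maxl _ _) hN0.
move=> r hr; have [|u [hu [g [c [hg e]]]]] := hHN r.
  by apply: (included_saturation hM); apply: included_adjoin.
apply: (hGs N.+1 u) => //; rewrite e.
case: (classic (M c)) => [hc|hc]; first by apply: mem_idealD => //; apply/hGJ/hMa.
case: hn1; apply: (chain_included hGd (leq_trans (leq_maxr _ _) hN0)).
apply: (hGs N c) => //.
have -> : c * a = u * r - g by rewrite e; ring.
by apply: mem_idealB; [|apply: mem_idealMl|apply: hGd].
Qed.

(* Noetherian induction on J; the maximal colon ideal (J : a) is a prime between x
   and M, hence equals M by minimality, so that M a lies in J. *)
Lemma minimal_prime_dcc M x : noetherian R -> minimal_prime_over M x ->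
  forall J, is_ideal J -> saturated M J -> J x -> dcc_saturated M J.
Proof.
move=> hN [hM hMx hmin] J0 hJ0 hJ0s hJ0x; apply: NNPP => hbad0.
pose S J := [/\ is_ideal J, saturated M J, J x & ~ dcc_saturated M J].
have hS J : S J -> is_ideal J by case.
have [J [[hJ hJs hJx hJb] hmax]] :=
  noetherian_maximal hN hS (ex_intro S J0 (And4 hJ0 hJ0s hJ0x hbad0)).
apply: hJb; case: (classic (J 1)) => [hJ1|hJ1].
  move=> G [hGi _ _ hGJ] N0; exists N0 => // r _.
  by rewrite -[r]mulr1; apply: mem_idealMl; [apply: hGi | apply: hGJ].
pose T K := exists2 b, ~ J b & K = colon J b.
have hT K : T K -> is_ideal K by case=> b _ ->; apply: colon_ideal.
have [K [[a ha ->] hKmax]] :=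
  noetherian_maximal hN hT (ex_intro T _ (ex_intro2 _ _ 1 hJ1 erefl)).
have hKpr : is_prime_ideal (colon J a).
  by apply: maximal_colon_prime => // b hb; apply: hKmax; exists b.
have hKM : included (colon J a) M.
  by move=> t ht; apply: NNPP => hMt; apply: ha; apply: hJs ht.
have hMK := hmin _ hKpr (mem_idealMr a hJ hJx) hKM.
apply: (dcc_saturated_adjoin hM hMK); apply: NNPP => hb; apply: ha.
pose J' := saturation M (adjoin J a).
have hJJ' : included J J'.
  by move=> r hr; apply: (included_saturation hM); apply: included_adjoin.
apply: (hmax J' _ hJJ'); first last.
  by apply: (included_saturation hM); apply: adjoin_id.
split=> //; [exact/saturation_ideal/adjoin_ideal | exact: saturation_saturated | exact: hJJ'].
Qed.

Definition scale_ideal x E := fun r => exists s, E s /\ r = x * s.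

(* Removes the generator a i: from u a i = e + x s and v s = e2 + sum c l a l one
   gets (u v - x c i) a i in E' + (a 0, ..., a (i-1)), with u v - x c i outside M. *)
Lemma nakayama_step M E E' x (a : nat -> R) i :
  is_prime_ideal M -> M x -> is_ideal E -> is_ideal E' -> E (a i) ->
  included E (saturation M (ideal_add E' (ideal_span a i.+1))) ->
  included E (saturation M (ideal_add E' (scale_ideal x E))) ->
  included E (saturation M (ideal_add E' (ideal_span a i))).
Proof.
move=> hM hMx hE hE' hai h1 h2.
have hK : is_ideal (ideal_add E' (ideal_span a i)) := ideal_add_ideal hE' (ideal_span_ideal a i).
have [hMi hM1 hMpr] := hM.
have [u [hu [e [t [he [[s [hs ->]] eu]]]]]] := h2 _ hai.
have [v [hv [e2 [t2 [he2 [[c ->] ev]]]]]] := h1 _ hs.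
rewrite big_ord_recr /= in ev.
set S := \sum_(l < i) c l * a l in ev.
set z := u * v - x * c i.
have key : ideal_add E' (ideal_span a i) (z * a i).
  exists (v * e + x * e2), (x * S); split; first by apply: mem_idealD => //; apply: mem_idealMl.
  split.
    by exists (fun l => x * c l); rewrite /S mulr_sumr; apply: eq_bigr => l _; rewrite mulrA.
  have -> : z * a i = v * (u * a i) - x * (c i * a i) by rewrite /z; ring.
  have -> : v * (u * a i) = v * e + x * (v * s) by rewrite eu; ring.
  by rewrite ev; ring.
have hz : ~ M z.
  move=> hm; have : M (u * v).
    have -> : u * v = z + c i * x by rewrite /z; ring.
    by apply: mem_idealD => //; apply: mem_idealMl.
  by move/hMpr => [].
move=> r /h1 [w [hw [e3 [t3 [he3 [[d ->] ew]]]]]].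
exists (z * w); split; first exact: prime_idealM_neq.
rewrite big_ord_recr /= in ew.
set S' := \sum_(l < i) d l * a l in ew.
have -> : z * w * r = z * (e3 + S') + d i * (z * a i) by rewrite -mulrA ew; ring.
apply: mem_idealD => //; apply: mem_idealMl => //.
by exists e3, S'; split => //; split => //; exists d.
Qed.

(* Nakayama's lemma for the finitely generated R_M-module E R_M: if E = E' + x E
   with x in M, then E = E'. *)
Lemma nakayama_saturation M E E' x n (a : nat -> R) :
  is_prime_ideal M -> M x -> is_ideal E -> is_ideal E' -> (forall i, (i < n)%N -> E (a i)) ->
  included E (ideal_span a n) -> included E (saturation M (ideal_add E' (scale_ideal x E))) ->
  included E (saturation M E').
Proof.
move=> hM hMx hE hE' ha hsp hx.
have h k i : (i + k = n)%N -> included E (saturation M (ideal_add E' (ideal_span a i))).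
  elim: k i => [|k IH] i hik.
    rewrite addn0 in hik; subst i => r hr; apply: (included_saturation hM).
    by exists 0, r; split; [apply: mem_ideal0 | split; [apply: hsp | rewrite add0r]].
  apply: (nakayama_step hM hMx hE hE'); last by [].
    by apply: ha; rewrite -hik -addSnnS leq_addr.
  by apply: IH; rewrite addSnnS.
move=> r /(h n 0%N (add0n n)) [u [hu [e [t [he [[c ->] e']]]]]].
by exists u; split => //; rewrite e' big_ord0 addr0.
Qed.

End Saturation.

(* The ideals E n = p^n R_P ∩ R descend; modulo x they stabilise by the descending
   chain condition at M, and Nakayama's lemma turns this into E N R_M = E (N+1) R_M. *)
Lemma local_powers_stabilize (R : comNzRingType) (M P : R -> Prop) x p :
  noetherian R -> minimal_prime_over M x -> is_prime_ideal P -> ~ P x ->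
  exists N, included (saturation P (principal (p ^+ N)))
                     (saturation M (saturation P (principal (p ^+ N.+1)))).
Proof.
move=> hN hmin hP hxP; have [hM hMx _] := hmin.
pose E n := saturation P (principal (p ^+ n)).
have hEi n : is_ideal (E n) := saturation_ideal hP (principal_ideal _).
have hEs n : saturated P (E n) := saturation_saturated hP.
have hEd n : included (E n.+1) (E n).
  move=> r [v [hv [c e]]]; exists v; split => //; exists (c * p).
  by rewrite e exprS mulrA.
pose G n := saturation M (adjoin (E n) x).
have hch : saturated_chain M (saturation M (principal x)) G.
  split => n.
  - exact/saturation_ideal/adjoin_ideal.
  - exact: saturation_saturated.
  - by move=> r [u [hu [e [c [he ee]]]]]; exists u; split => //; exists e, c; split => //; apply: hEd.
  - move=> r [u [hu [c ee]]]; exists u; split => //; exists 0, c.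
    by rewrite add0r; split => //; apply: mem_ideal0.
have hJx : saturation M (principal x) x.
  by apply: (included_saturation hM); apply: principal_id.
have [N _ hGN] := minimal_prime_dcc hN hmin (saturation_ideal hM (principal_ideal x))
  (saturation_saturated (I := principal x) hM) hJx hch 0.
exists N.
have hB : included (E N) (saturation M (ideal_add (E N.+1) (scale_ideal x (E N)))).
  move=> r hr; have [|u [hu [e [c [he ee]]]]] := hGN r.
    by apply: (included_saturation hM); apply: included_adjoin.
  have hc : E N c.
    apply: (hEs N x c hxP); rewrite mulrC.
    have -> : c * x = u * r - e by rewrite ee; ring.
    by apply: mem_idealB => //; [apply: mem_idealMl | apply: hEd].
  exists u; split => //; exists e, (x * c); split => //; split; first by exists c.
  by rewrite ee mulrC.
have [m [a [ha hsp]]] := noetherian_finitely_generated hN (hEi N).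
exact: nakayama_saturation hM hMx (hEi N) (hEi N.+1) ha hsp hB.
Qed.

(* Krull's principal ideal theorem: a minimal prime over x has height at most one. *)
Lemma krull_principal_ideal (R : idomainType) (M P : R -> Prop) x p :
  noetherian R -> minimal_prime_over M x -> is_prime_ideal P -> included P M ->
  (exists r, M r /\ ~ P r) -> P p -> p = 0.
Proof.
move=> hN hmin hP hPM [r0 [hMr0 hPr0]] hPp; have [hM hMx hminG] := hmin.
have hxP : ~ P x by move=> hPx; apply/hPr0/(hminG P hP hPx hPM).
have [N hNst] := local_powers_stabilize p hN hmin hP hxP.
have [hPi hP1 hPpr] := hP.
have [w [hw [v [hv [c e]]]]] : saturation M (saturation P (principal (p ^+ N.+1))) (p ^+ N).
  by apply: hNst; exists 1; split => //; rewrite mul1r; apply: principal_id.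
apply/eqP; apply: contraT => hp0.
have : (v * w - c * p) * p ^+ N = 0 by rewrite mulrBl -mulrA e exprSr; ring.
move/eqP; rewrite mulf_eq0 expf_eq0 (negbTE hp0) andbF orbF subr_eq0 => /eqP evw.
have : P (v * w) by rewrite evw; apply: mem_idealMl.
by case/hPpr => // /hPM.
Qed.

Lemma fraction_field_multiple (R : idomainType) (A : R -> Prop) :
  (forall x, A x -> x != 0) -> localization_is_fraction_field A ->
  forall x : R, x != 0 -> exists s b, A s /\ s = b * x.
Proof.
move=> hA0 hloc x hx; have [a [s [hs e]]] := hloc (FracField.tofrac x)^-1.
exists s, a; split => //; apply/eqP; rewrite -tofrac_eq tofracM; apply/eqP.
have hxF : FracField.tofrac x != 0 by rewrite tofrac_eq0.
have hsF : FracField.tofrac s != 0 by rewrite tofrac_eq0 hA0.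
by rewrite -[LHS]mul1r -(mulVf hxF) e; field.
Qed.

(* If every fibre of a relation were covered by a finite list, the lists,
   enumerated through pickle, would exhaust T. *)
Lemma uncountable_infinite_fiber (T : eqType) (t0 : T) (Pn : nat -> T -> Prop) :
  uncountable T -> (forall l, exists n, Pn n l) ->
  exists n, forall s : seq T, exists l, Pn n l /\ l \notin s.
Proof.
move=> hu hall; apply: NNPP => hno.
have hL n : exists s : seq T, forall l, Pn n l -> l \in s.
  apply: NNPP => h; apply: hno; exists n => s; apply: NNPP => h2; apply: h; exists s.
  move=> l hl; apply: NNPP => hls; apply: h2; exists l; split => //; exact/negP.
pose L n := sval (constructive_indefinite_description _ (hL n)).
have hLn n : forall l, Pn n l -> l \in L n.
  exact: (svalP (constructive_indefinite_description _ (hL n))).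
apply: hu; exists (fun m => if unpickle m is Some (n, i) then nth t0 (L n) i else t0).
move=> l; have [n hn] := hall l.
by exists (pickle (n, index l (L n))); rewrite pickleK nth_index //; apply: hLn.
Qed.

Lemma infinite_injective_seq (T : eqType) (Pp : T -> Prop) :
  (forall s : seq T, exists l, Pp l /\ l \notin s) ->
  exists lam : nat -> T, (forall j, Pp (lam j)) /\ (forall i j, (i < j)%N -> lam i != lam j).
Proof.
move=> h; pose next s := sval (constructive_indefinite_description _ (h s)).
have hnext s : Pp (next s) /\ next s \notin s.
  exact: (svalP (constructive_indefinite_description _ (h s))).
pose S := fix S n := if n is n'.+1 then next (S n') :: S n' else [::].
exists (fun j => next (S j)); split => [j|]; first exact: (hnext _).1.
have hin i j : (i < j)%N -> next (S i) \in S j.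
  elim: j => [//|j IH]; rewrite ltnS leq_eqVlt => /orP [/eqP ->|/IH hi].
    by rewrite /= in_cons eqxx.
  by rewrite /= in_cons hi orbT.
move=> i j hij; apply/eqP => e.
by have := (hnext (S j)).2; rewrite -e hin.
Qed.

Lemma prod_addl_mod (R : comNzRingType) (y : R) (a : nat -> R) n :
  exists t, \prod_(i < n) (y + a i) = \prod_(i < n) a i + y * t.
Proof.
elim: n => [|n [t IH]]; first by exists 0; rewrite !big_ord0 mulr0 addr0.
by exists (t * (y + a n) + \prod_(i < n) a i); rewrite !big_ord_recr /= IH; ring.
Qed.

(* The ascending chain (b 0, ..., b n) of ideals stabilises at some N, and
   b (N+1) = sum d i * b i multiplied by the product of the x i gives the claim
   after cancelling s. *)
Lemma noetherian_prod_dvd (R : idomainType) (s : R) (x b : nat -> R) :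
  noetherian R -> s != 0 -> (forall j, s = b j * x j) ->
  exists N t, \prod_(i < N.+1) x i = t * x N.+1.
Proof.
move=> hN hs hb.
have hmono n r : ideal_span b n.+1 r -> ideal_span b n.+2 r.
  case=> c ->; exists (fun i => if (i < n.+1)%N then c i else 0).
  rewrite [in RHS]big_ord_recr /= ltnn mul0r addr0.
  by apply: eq_bigr => i _; rewrite ltn_ord.
have [N hNc] := hN (fun n => ideal_span b n.+1) (fun n => ideal_span_ideal b n.+1) hmono.
have [d hd] := hNc N.+1 (leqnSn N) (b N.+1) (ideal_span_mem b (ltnSn N.+1)).
exists N, (\sum_(i < N.+1) d i * \prod_(l < N.+1 | l != i) x l).
apply: (mulfI hs).
rewrite {1}(hb N.+1) -mulrA [b N.+1 * _]mulrC -mulrA hd.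
rewrite mulr_sumr mulr_suml !mulr_sumr; apply: eq_bigr => i _.
by rewrite (bigD1 i) //= (hb i); ring.
Qed.

(* For m distinct scalars l_i and l, the p-parts of the y + phi(l_i) p modulo
   y + phi(l) p multiply to a unit times p^m. *)
Lemma principal_expn_of_prod (k : fieldType) (R : comNzRingType) (phi : {rmorphism k -> R})
    (y p : R) (lam : nat -> k) m :
  (forall i, (i < m)%N -> lam i != lam m) ->
  principal (y + phi (lam m) * p) (\prod_(i < m) (y + phi (lam i) * p)) ->
  principal (y + phi (lam m) * p) (p ^+ m).
Proof.
set x := y + phi (lam m) * p => hinj [t ht].
have [t' ht'] := prod_addl_mod x (fun i => (phi (lam i) - phi (lam m)) * p) m.
pose c := \prod_(i < m) (lam i - lam m).
have hc : c != 0 by apply/prodf_neq0 => i _; rewrite subr_eq0 hinj.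
have e1 : \prod_(i < m) (y + phi (lam i) * p) =
          \prod_(i < m) (x + (phi (lam i) - phi (lam m)) * p).
  by apply: eq_bigr => i _; rewrite /x; ring.
have e2 : \prod_(i < m) ((phi (lam i) - phi (lam m)) * p) = phi c * p ^+ m.
  rewrite big_split /= prodr_const card_ord rmorph_prod; congr (_ * _).
  by apply: eq_bigr => i _; rewrite rmorphB.
exists (phi c^-1 * (t - t')).
rewrite -[p ^+ m]mul1r -(rmorph1 phi) -(mulVf hc) rmorphM -mulrA -e2.
have -> : \prod_(i < m) ((phi (lam i) - phi (lam m)) * p) = t * x - x * t'.
  by rewrite -ht e1 ht'; ring.
ring.
Qed.

Definition nonzero_primes_maximal (S : comNzRingType) := forall (P Q : S -> Prop) p,
  is_prime_ideal P -> is_prime_ideal Q -> included P Q -> P p -> p != 0 -> included Q P.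

Section CountableLocalization.
Variables (k : fieldType) (R : idomainType) (phi : {rmorphism k -> R}).
Variable A : R -> Prop.
Hypotheses (hk : uncountable k) (hN : noetherian R) (hA0 : forall x, A x -> x != 0).
Hypotheses (hAc : countable_subset A) (hloc : localization_is_fraction_field A).

(* Uncountably many x = q + phi(l) p each divide an element of the countable set A,
   so one s in A is divisible by infinitely many of them. *)
Lemma power_mem_principal p q : (forall l, q + phi l * p != 0) ->
  exists l m, principal (q + phi l * p) (p ^+ m).
Proof.
move=> hx0; pose xl l := q + phi l * p.
have [f hf] := hAc.
have hall l : exists m, A (f m) /\ exists b, f m = b * xl l.
  have [s [b [hs e]]] := fraction_field_multiple hA0 hloc (hx0 l).
  by have [m hm] := hf s hs; exists m; rewrite hm; split => //; exists b.
have [m0 hm0] := uncountable_infinite_fiber 0 hk hall.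
have [lam [hlam hinj]] := infinite_injective_seq hm0.
pose b j := sval (constructive_indefinite_description _ (hlam j).2).
have hb j : f m0 = b j * xl (lam j).
  exact: (svalP (constructive_indefinite_description _ (hlam j).2)).
have [N [t ht]] := noetherian_prod_dvd hN (hA0 (hlam 0%N).1) hb.
exists (lam N.+1), N.+1; apply: principal_expn_of_prod.
  by move=> i hi; apply: hinj.
by exists t.
Qed.

Lemma countable_localization_nonzero_primes_maximal : nonzero_primes_maximal R.
Proof.
move=> P Q p hP hQ hPQ hPp hp0; apply: NNPP => hQP.
have [r0 hr0] := not_all_ex_not _ _ hQP; have [hQr0 hPr0] := imply_to_and _ _ hr0.
have [n [C hC]] := noetherian_prime_product_over hN (principal_ideal p).
pose F j := if j is j'.+1 then
   (if excluded_middle_informative (included Q (C j')) then P else C j') else P.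
have hFp i : (i < n.+1)%N -> is_prime_ideal (F i).
  case: i => [|i] //= hi; case: excluded_middle_informative => hh //.
  exact: (hC.1 i hi).1.
have hFe i : (i < n.+1)%N -> exists r, Q r /\ ~ F i r.
  case: i => [|i] /= hi; first by exists r0.
  case: excluded_middle_informative => h; first by exists r0.
  have [r hr] := not_all_ex_not _ _ h; exists r; exact: imply_to_and.
have hPi := prime_ideal_ideal hP; have hQi := prime_ideal_ideal hQ.
have [q [hQq hqF]] := prime_avoidance hQi hFp hFe.
have hqP : ~ P q := hqF 0%N erefl.
have hqC i : (i < n)%N -> ~ included Q (C i) -> ~ C i q.
  by move=> hi hn; have := hqF i.+1 hi; rewrite /F; case: excluded_middle_informative.
have hx0 l : q + phi l * p != 0.
  apply/eqP => e; apply: hqP.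
  have -> : q = - (phi l * p) by apply/eqP; rewrite -subr_eq0 opprK e.
  by apply: mem_idealN => //; apply: mem_idealMl.
have [l [m hpm]] := power_mem_principal hx0.
set x := q + phi l * p in hpm.
have hQx : Q x by apply: mem_idealD => //; apply: mem_idealMl => //; apply: hPQ.
have [M [hmin hMQ]] := minimal_prime_below hN hQ hQx.
have [hM hMx _] := hmin; have hMi := prime_ideal_ideal hM.
have hMp : M p by apply: (prime_idealX (n := m) hM); case: hpm => d ->; apply: mem_idealMl.
have hMq : M q.
  have -> : q = x - phi l * p by rewrite /x; ring.
  by apply: mem_idealB => //; apply: mem_idealMl.
have [i hi hiM] := prime_product_over_cover hC hM (principal_included hMi hMp).
have [hCi hpCi] := hC.1 i hi.
move/eqP: hp0; apply; case: (classic (included Q (C i))) => hQC.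
  apply: (krull_principal_ideal hN hmin hP) hPp.
    by move=> r /hPQ /hQC /hiM.
  by exists r0; split => //; apply/hiM/hQC.
apply: (krull_principal_ideal hN hmin hCi hiM) (hpCi _ (principal_id p)).
by exists q; split => //; apply: hqC.
Qed.

End CountableLocalization.

Definition zero_ideal (R : comNzRingType) := fun r : R => r = 0.

Lemma zero_ideal_prime (R : idomainType) : is_prime_ideal (@zero_ideal R).
Proof.
rewrite /zero_ideal; split; [split | exact/eqP/oner_neq0 |].
- by [].
- by move=> x y -> ->; rewrite addr0.
- by move=> r x ->; rewrite mulr0.
by move=> x y /eqP; rewrite mulf_eq0 => /orP [/eqP|/eqP]; [left|right].
Qed.

Lemma nonfield_prime_chain1 (R : idomainType) :
  noetherian R -> ~ is_field_ring R -> exists c, @prime_chain R 1 c.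
Proof.
move=> hN hnf; have [z hz] := not_all_ex_not _ _ hnf.
have [hz0 /negP hzu] := imply_to_and _ _ hz.
have [M [hM hMz]] := nonunit_prime_ideal hN hzu.
exists (fun i => if i == 0%N then @zero_ideal R else M); split.
  by case=> [|[|i]] //= _; apply: zero_ideal_prime.
case=> [|i] // _ /=; split; first by move=> r ->; apply: mem_ideal0; apply: prime_ideal_ideal hM.
by exists z; split => //; apply/eqP.
Qed.

Lemma nonzero_primes_maximal_chain_le1 (R : idomainType) m c :
  nonzero_primes_maximal R -> @prime_chain R m c -> (m <= 1)%N.
Proof.
move=> hmax [hcp hcs]; rewrite leqNgt; apply/negP => hm.
have [[h01 [y [hy1 hy0]]] [h12 [r [hr2 hr1]]]] := (hcs 0%N (ltnW hm), hcs 1%N hm).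
apply/hr1/(hmax _ _ y (hcp 1%N (ltnW hm)) (hcp 2%N hm) h12 hy1) => //.
by apply: contra_notN hy0 => /eqP ->; apply: mem_ideal0; apply: prime_ideal_ideal (hcp 0%N _).
Qed.

Lemma spec_countable_of_countable_localization (R : idomainType) (A : R -> Prop) :
  noetherian R -> (forall x, A x -> x != 0) -> countable_subset A ->
  localization_is_fraction_field A -> nonzero_primes_maximal R -> spec_countable R.
Proof.
move=> hN hA0 [f hf] hloc hmax.
have hL n := noetherian_prime_product_over hN (principal_ideal (f n)).
pose l n := sval (constructive_indefinite_description _ (hL n)).
have hl n := svalP (constructive_indefinite_description _ (hL n)).
pose C n := sval (constructive_indefinite_description _ (hl n)).
have hC n : prime_product_over (principal (f n)) (l n) (C n).
  exact: (svalP (constructive_indefinite_description _ (hl n))).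
exists (fun m => if m is m'.+1 then
          if unpickle m' is Some (n, i) then C n i else @zero_ideal R
        else @zero_ideal R).
move=> P hP; have hPi := prime_ideal_ideal hP.
case: (classic (exists y, P y /\ y != 0)) => [[y [hPy hy0]]|hno]; last first.
  exists 0%N => x /=; split; last by move=> ->; apply: mem_ideal0.
  by move=> hx; apply: NNPP => hx0; apply: hno; exists x; split => //; apply/eqP.
have [s [b [hs e]]] := fraction_field_multiple hA0 hloc hy0.
have [n hn] := hf s hs.
have hPs : included (principal (f n)) P.
  by apply: principal_included => //; rewrite hn e; apply: mem_idealMl.
have [i hi hiP] := prime_product_over_cover (hC n) hP hPs.
have [hCi hsC] := (hC n).1 i hi.
exists (pickle (n, i)).+1 => x /=; rewrite pickleK; split; last exact: hiP.
by apply: (hmax _ _ (f n) hCi hP hiP); [apply/hsC/principal_id | rewrite hn hA0].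
Qed.

Unset Implicit Arguments.

Theorem lemma5p2 (k : fieldType) (R : idomainType) (phi : {rmorphism k -> R})
  (hk : uncountable k) (hnoeth : noetherian R) (hnf : ~ is_field_ring R)
  (A : R -> Prop) (hA0 : forall x, A x -> x != 0) (hAm : mult_closed A)
  (hAc : countable_subset A) (hloc : localization_is_fraction_field A) :
  krull_dim_eq R 1 /\ spec_countable R.
Proof.
have hmax := countable_localization_nonzero_primes_maximal phi hk hnoeth hA0 hAc hloc.
split; last exact: spec_countable_of_countable_localization hnoeth hA0 hAc hloc hmax.
split; first exact: nonfield_prime_chain1.
by move=> m c; apply: nonzero_primes_maximal_chain_le1.
Qed.
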